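(* Let $x,y\in\mathcal{X}$, let $R'$ be a ranking with $xR'y$, and let $\mathrel{W}$ be a tournament that agrees with $R'$ on every pair $\{z,w\}\nsubseteq[x,y]_{R'}$. Then the outcome under $\mathrel{W}$ of any strategy agrees with $R'$ on every pair $\{z,w\}\nsubseteq[x,y]_{R'}$.
   Context: Let $\mathcal{X}$ be a finite set of alternatives. A proto-ranking is an irreflexive and transitive binary relation on $\mathcal{X}$; a ranking is a total proto-ranking; a tournament is a total and asymmetric binary relation on $\mathcal{X}$. Two relations agree on a pair $\{z,w\}$ if they relate $z$ and $w$ in the same direction. For $xR'y$, $[x,y]_{R'}=\{x,y\}\cup\{c: xR'cR'y\}$. Interaction: given a tournament $\mathrel{W}$, start from $R_0=\varnothing$; in each period with $R_{t-1}$ not total a chair offers a pair $\{u,v\}$ of distinct alternatives unranked by $R_{t-1}$, the winner is $u$ if $u\mathrel{W}v$ and $v$ otherwise, and $R_t$ is the transitive closure of $R_{t-1}\cup\{(\text{winner},\text{loser})\}$; stop when $R_t$ is total. A strategy assigns to each non-terminal history (sequence of (winner, loser) pairs) a pair unranked at it; its outcome under $\mathrel{W}$ is the final ranking. *)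

From mathcomp Require Import all_boot.
Set Implicit Arguments. Unset Strict Implicit. Unset Printing Implicit Defensive.

Section Defs.
Variable X : finType.

Definition irreflexive_rel (R : rel X) : Prop := forall z, ~~ R z z.
Definition transitive_rel (R : rel X) : Prop :=
  forall a b c, R a b -> R b c -> R a c.
Definition total_rel (R : rel X) : Prop :=
  forall z w, z != w -> R z w || R w z.
Definition asymmetric_rel (R : rel X) : Prop :=
  forall z w, R z w -> ~~ R w z.

Definition proto_ranking (R : rel X) : Prop :=
  irreflexive_rel R /\ transitive_rel R.
Definition ranking (R : rel X) : Prop := proto_ranking R /\ total_rel R.
Definition tournament (W : rel X) : Prop := total_rel W /\ asymmetric_rel W.

Definition agree_on (R R' : rel X) (z w : X) : Prop :=
  R z w = R' z w /\ R w z = R' w z.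

Definition interval (R' : rel X) (x y : X) : pred X :=
  fun c => [|| c == x, c == y | R' x c && R' c y].

(* A history is a sequence of (winner, loser) pairs; R_h is the transitive
   closure of the set of these pairs. *)
Definition history := seq (X * X).
Definition hrel (h : history) : rel X :=
  fun a b => let e : rel X := fun u v => (u, v) \in h in
             [exists c, e a c && connect e c b].

Definition totalb (R : rel X) : bool :=
  [forall z, forall w, (z != w) ==> R z w || R w z].

Definition unranked (R : rel X) (p : X * X) : bool :=
  [&& p.1 != p.2, ~~ R p.1 p.2 & ~~ R p.2 p.1].

Definition strategy := history -> X * X.

Definition valid_strategy (s : strategy) : Prop :=
  forall h : history, ~~ totalb (hrel h) -> unranked (hrel h) (s h).

Definition duel (W : rel X) (p : X * X) : X * X :=
  if W p.1 p.2 then p else (p.2, p.1).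

Fixpoint play (W : rel X) (s : strategy) (n : nat) : history :=
  match n with
  | 0 => [::]
  | n.+1 => let h := play W s n in
            if totalb (hrel h) then h else rcons h (duel W (s h))
  end.

(* The interaction terminates after at most #|X|^2 periods (each period
   ranks a previously unranked ordered pair), so this is the final ranking. *)
Definition outcome (W : rel X) (s : strategy) : rel X :=
  hrel (play W s (#|X| ^ 2)).

End Defs.

From mathcomp Require Import all_boot.

Set Implicit Arguments.
Unset Strict Implicit.
Unset Printing Implicit Defensive.

(* Collapse the interval I := [x,y]_{R'} to a single block: u and v are
   related by the coarsening of R' when both lie in I or u R' v.  Since I is
   convex for the ranking R', the coarsening is transitive, and every duel won
   under W is one of its edges because W agrees with R' off I.  Hence the
   outcome, a transitive closure of duels, is contained in the coarsening,
   i.e. it is sound for R' on every pair not inside I.  The outcome is also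
   total, since every period ranks a new ordered pair, and a total relation
   that is sound for the strict order R' on a pair agrees with R' there. *)

Section Interaction.
Variable X : finType.
Implicit Types (R Q W : rel X) (I : pred X) (h : history X).

Definition convex R I : Prop :=
  forall a b d, a \in I -> b \in I -> R a d -> R d b -> d \in I.

Definition coarsen R I : rel X := fun u v => (u \in I) && (v \in I) || R u v.

Lemma interval_convex R x y :
  transitive_rel R -> R x y -> convex R (interval R x y).
Proof.
move=> Rtr Rxy a b d aI bI Rad Rdb; apply/or3P/Or33/andP; split.
  case/or3P: aI => [/eqP<-|/eqP ay|/andP[Rxa _]] //; last exact: Rtr Rxa Rad.
  by rewrite ay in Rad; apply: Rtr Rxy Rad.
case/or3P: bI => [/eqP bx|/eqP<-|/andP[_ Rby]] //; last exact: Rtr Rdb Rby.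
by rewrite bx in Rdb; apply: Rtr Rdb Rxy.
Qed.

Section Convex.
Variables (R : rel X) (I : pred X).
Hypotheses (Rtr : transitive_rel R) (Rtot : total_rel R) (convI : convex R I).

Lemma convex_above a b d :
  a \in I -> b \in I -> d \notin I -> R a d -> R b d.
Proof.
move=> aI bI dI Rad; have bd : b != d by apply: contraNneq dI => <-.
by case/orP: (Rtot bd) => // Rdb; rewrite (convI aI bI Rad Rdb) in dI.
Qed.

Lemma convex_below a b d :
  a \in I -> b \in I -> d \notin I -> R d a -> R d b.
Proof.
move=> aI bI dI Rda; have db : d != b by apply: contraNneq dI => ->.
by case/orP: (Rtot db) => // Rbd; rewrite (convI bI aI Rbd Rda) in dI.
Qed.

Lemma coarsen_trans : transitive_rel (coarsen R I).
Proof.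
move=> a b c /orP[/andP[aI bI]|Rab] /orP[/andP[bI' cI]|Rbc]; rewrite /coarsen.
- by rewrite aI cI.
- by case: (boolP (c \in I)) => [|cI]; rewrite ?aI // (convex_above bI aI cI Rbc) orbT.
- by case: (boolP (a \in I)) => [|aI]; rewrite ?cI // (convex_below bI' cI aI Rab) orbT.
- by rewrite (Rtr Rab Rbc) orbT.
Qed.

End Convex.

Lemma hrel_sub Q h :
  transitive_rel Q -> (forall u v, (u, v) \in h -> Q u v) ->
  forall a b, hrel h a b -> Q a b.
Proof.
move=> Qtr hQ a b /existsP[c /andP[hac /connectP[p hp ->]]].
have hpath : path (fun u v => (u, v) \in h) a (c :: p) by rewrite /= hac.
have Qpath : path Q a (c :: p) by apply: sub_path hpath => u v /hQ.
have Qtr' : transitive Q by move=> ? ? ? ; apply: Qtr.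
by move/allP: (order_path_min Qtr' Qpath); apply; rewrite mem_last.
Qed.

Lemma hrel_rcons h p : subrel (hrel h) (hrel (rcons h p)).
Proof.
move=> a b /existsP[c /andP[hac hcb]]; apply/existsP; exists c.
rewrite mem_rcons in_cons hac orbT /=.
by apply: connect_sub hcb => u v huv; rewrite connect1 // mem_rcons in_cons huv orbT.
Qed.

Lemma hrel_rcons_last h a b : hrel (rcons h (a, b)) a b.
Proof. by apply/existsP; exists b; rewrite mem_rcons mem_head connect0. Qed.

Definition ranked_pairs R : {set X * X} := [set p | R p.1 p.2].

Lemma totalbP R : reflect (total_rel R) (totalb R).
Proof.
apply: (iffP forallP) => [Rtot z w zw | Rtot z]; last by apply/forallP => w; apply/implyP/Rtot.
by move/forallP/(_ w)/implyP: (Rtot z); apply.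
Qed.

Lemma totalbPn R : ~~ totalb R -> exists p, p \notin ranked_pairs R.
Proof.
case/forallPn=> z /forallPn[w]; rewrite negb_imply => /andP[_ /norP[Rzw _]].
by exists (z, w); rewrite inE.
Qed.

Lemma ranked_pairs_duel W h p :
  unranked (hrel h) p ->
  ranked_pairs (hrel h) \proper ranked_pairs (hrel (rcons h (duel W p))).
Proof.
case/and3P=> _ h12 h21; apply/properP; split.
  by apply/subsetP => q; rewrite !inE; apply: hrel_rcons.
exists (duel W p); first by rewrite inE; case: (duel W p) => a b; apply: hrel_rcons_last.
by rewrite inE /duel; case: ifP.
Qed.

Section Play.
Variables (W : rel X) (s : strategy X).
Hypothesis valid_s : valid_strategy s.

Lemma play_ranked n :
  ~~ totalb (hrel (play W s n)) -> n <= #|ranked_pairs (hrel (play W s n))|.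
Proof.
elim: n => //= n IH; case: ifP => [->|Ht] // _.
apply: leq_ltn_trans (IH (negbT Ht)) (proper_card (ranked_pairs_duel W _)).
exact: valid_s (negbT Ht).
Qed.

Lemma outcome_total : totalb (outcome W s).
Proof.
apply: contraT => Nt; have [p p_unranked] := totalbPn Nt.
suff : #|ranked_pairs (outcome W s)| < #|X| ^ 2 by rewrite ltnNge (play_ranked Nt).
rewrite -mulnn -card_prod -cardsT; apply/proper_card/properP.
by split; [apply: subsetT | exists p].
Qed.

Lemma play_won : tournament W ->
  forall n u v, (u, v) \in play W s n -> W u v && (u != v).
Proof.
case=> Wtot _; elim=> //= n IH u v; case: ifP => [_|Ht]; first exact: IH.
rewrite mem_rcons in_cons => /orP[/eqP|]; last exact: IH.
case/and3P: (valid_s (negbT Ht)); case: (s _) => a b /= ab _ _.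
rewrite /duel /=; case: ifP => Wab [-> ->]; first by rewrite Wab.
by move: (Wtot _ _ ab); rewrite Wab eq_sym ab andbT.
Qed.

End Play.

Lemma agree_on_sub_total R O z w :
  proto_ranking R -> total_rel O -> z != w ->
  (O z w -> R z w) -> (O w z -> R w z) -> agree_on O R z w.
Proof.
case=> Rirr Rtr Otot zw ORzw ORwz.
have Rasym a b : R a b -> R b a -> False.
  by move=> Rab /(Rtr _ _ _ Rab); rewrite (negbTE (Rirr a)).
split; apply/idP/idP.
- exact: ORzw.
- by move=> Rzw; case/orP: (Otot _ _ zw) => // /ORwz /(Rasym _ _ Rzw).
- exact: ORwz.
- by move=> Rwz; case/orP: (Otot _ _ zw) => // /ORzw /(Rasym _ _ Rwz).
Qed.

End Interaction.

Theorem lemma3 (X : finType) (x y : X) (R' W : rel X) (s : strategy X) :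
  ranking R' -> R' x y -> tournament W ->
  (forall z w : X, z != w -> ~~ ((z \in interval R' x y) && (w \in interval R' x y)) ->
     agree_on W R' z w) ->
  valid_strategy s ->
  forall z w : X, z != w -> ~~ ((z \in interval R' x y) && (w \in interval R' x y)) ->
    agree_on (outcome W s) R' z w.
Proof.
move=> [R'proto R'tot] Rxy Wt Wagree valid_s z w zw zwI.
set I := interval R' x y.
have [_ R'tr] := R'proto.
have outcome_coarsen : forall a b, outcome W s a b -> coarsen R' I a b.
  apply: hrel_sub; first exact/coarsen_trans/interval_convex.
  move=> u v /(play_won valid_s Wt)/andP[Wuv uv]; rewrite /coarsen.
  by case: (boolP (_ && _)) => //= uvI; case: (Wagree _ _ uv uvI) => <-.
apply: (agree_on_sub_total R'proto (totalbP _ (outcome_total W valid_s)) zw).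
  by move/outcome_coarsen; rewrite /coarsen (negbTE zwI).
by move/outcome_coarsen; rewrite /coarsen andbC (negbTE zwI).
Qed.
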